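(* Let $\hat\alpha\in\{-1,-2,\dots\}$ and let $\mathcal F=(F_1,F_2)$ be a pair of finite sets of positive integers. Then the polynomials $L_n^{\hat\alpha;\mathcal F}$, $n\in\sigma_{\mathcal F}$, are common eigenfunctions of the second order differential operator $D_{\mathcal F}=x\partial^2+h_1(x)\partial+h_0(x)$, $\partial=d/dx$, where $h_1(x)=\hat\alpha+k+1-x-2x\frac{(\Omega^{\hat\alpha}_{\mathcal F})'(x)}{\Omega^{\hat\alpha}_{\mathcal F}(x)}$ and $h_0(x)=-k_1-u_{\mathcal F}+(x-\hat\alpha-k)\frac{(\Omega^{\hat\alpha}_{\mathcal F})'(x)}{\Omega^{\hat\alpha}_{\mathcal F}(x)}+x\frac{(\Omega^{\hat\alpha}_{\mathcal F})''(x)}{\Omega^{\hat\alpha}_{\mathcal F}(x)}$; more precisely $D_{\mathcal F}(L_n^{\hat\alpha;\mathcal F})=-n\,L_n^{\hat\alpha;\mathcal F}$ for $n\in\sigma_{\mathcal F}$.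
   Context: $k_i=|F_i|$, $k=k_1+k_2$. Laguerre: $L_n^\alpha(x)=\sum_{j=0}^n\frac{(-x)^j}{j!}\binom{n+\alpha}{n-j}$. $u_{\mathcal F}=\sum_{f\in F_1}f+\sum_{f\in F_2}f-\binom{k_1+1}{2}-\binom{k_2}{2}$; $\sigma_{\mathcal F}=\{u_{\mathcal F},u_{\mathcal F}+1,\dots\}\setminus\{u_{\mathcal F}+f:f\in F_1\}$. $L_n^{\hat\alpha;\mathcal F}(x)$ is the $(k+1)\times(k+1)$ determinant with first row $\big((L^{\hat\alpha}_{n-u_{\mathcal F}})^{(j-1)}(x)\big)_{j=1}^{k+1}$, then rows $\big((L_f^{\hat\alpha})^{(j-1)}(x)\big)_j$ for $f\in F_1$ (increasing), then rows $\big(L_f^{\hat\alpha+j-1}(-x)\big)_j$ for $f\in F_2$. $\Omega^{\hat\alpha}_{\mathcal F}(x)$ is the $k\times k$ determinant with rows $\big((L_f^{\hat\alpha})^{(j-1)}(x)\big)_{j=1}^k$, $f\in F_1$, followed by rows $\big(L_f^{\hat\alpha+j-1}(-x)\big)_{j=1}^k$, $f\in F_2$. *)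

From HB Require Import structures.
From mathcomp Require Import all_boot all_order all_algebra.
Set Implicit Arguments. Unset Strict Implicit. Unset Printing Implicit Defensive.
Import Order.TTheory GRing.Theory Num.Theory.
Local Open Scope ring_scope.

Section Defs.
Variable R : numFieldType.

Definition gbinom (a : R) (m : nat) : R :=
  (\prod_(i < m) (a - i%:R)) / (m`!)%:R.

Definition laguerre (a : R) (n : nat) : {poly R} :=
  \sum_(j < n.+1) (((-1) ^+ j / (j`!)%:R) * gbinom (n%:R + a) (n - j)) *: 'X^j.

(* u_F = sum F1 + sum F2 - binom(k1+1,2) - binom(k2,2)  (always >= 0) *)
Definition uF (F1 F2 : seq nat) : nat :=
  (\sum_(f <- F1) f + \sum_(f <- F2) f - ('C((size F1).+1, 2) + 'C(size F2, 2)))%N.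

Definition in_sigmaF (F1 F2 : seq nat) (n : nat) : bool :=
  (uF F1 F2 <= n)%N && ((n - uF F1 F2)%N \notin F1).

(* entry (row r, column j; both 0-indexed) of the rows indexed by F1 then F2:
   rows for f in F1: (L_f^a)^{(j)}(x); rows for f in F2: L_f^{a+j}(-x) *)
Definition rowF (a : int) (F1 F2 : seq nat) (r j : nat) : {poly R} :=
  if (r < size F1)%N then (laguerre a%:~R (nth 0%N F1 r))^`(j)
  else (laguerre (a + j%:Z)%:~R (nth 0%N F2 (r - size F1))) \Po (- 'X).

Definition OmegaF (a : int) (F1 F2 : seq nat) : {poly R} :=
  \det (\matrix_(i < size F1 + size F2, j < size F1 + size F2)
          rowF a F1 F2 i j).

Definition LaguerreF (a : int) (F1 F2 : seq nat) (n : nat) : {poly R} :=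
  \det (\matrix_(i < (size F1 + size F2).+1, j < (size F1 + size F2).+1)
          (if i == 0 :> nat then (laguerre a%:~R (n - uF F1 F2)%N)^`(j)
           else rowF a F1 F2 i.-1 j)).

(* coefficients of D_F, evaluated at a point x where Omega(x) != 0 *)
Definition h1F (a : int) (F1 F2 : seq nat) (x : R) : R :=
  let Om := OmegaF a F1 F2 in
  a%:~R + (size F1 + size F2)%:R + 1 - x - 2 * x * (Om^`()).[x] / Om.[x].

Definition h0F (a : int) (F1 F2 : seq nat) (x : R) : R :=
  let Om := OmegaF a F1 F2 in
  - (size F1)%:R - (uF F1 F2)%:R
  + (x - a%:~R - (size F1 + size F2)%:R) * (Om^`()).[x] / Om.[x]
  + x * (Om^`(2)).[x] / Om.[x].

Definition DF (a : int) (F1 F2 : seq nat) (p : {poly R}) (x : R) : R :=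
  x * (p^`(2)).[x] + h1F a F1 F2 x * (p^`()).[x] + h0F a F1 F2 x * p.[x].

End Defs.

From HB Require Import structures.
From mathcomp Require Import all_boot all_order all_algebra ring.
Set Implicit Arguments. Unset Strict Implicit. Unset Printing Implicit Defensive.
Import Order.TTheory GRing.Theory Num.Theory.
Local Open Scope ring_scope.

(* Proof strategy.  The theorem is a purely algebraic identity; it follows
   from a general "Wronskian conjugation" principle for derivations.

   Let D be a derivation of a commutative ring S, and X, b in S with D X = 1
   and D b = -1, so that  T f := X D^2 f + b D f  is a Laguerre-type operator.
   Given Y_0, ..., Y_(k-1) with T Y_i = lam_i Y_i (D lam_i = 0), let
     W   := det (D^j Y_i)_(i,j<k)                     (generalized Wronskian),
     L f := det of the (k+1)x(k+1) matrix with first row (D^j f)_j and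
            further rows (D^j Y_i)_j.
   Expanding L f along its first row, the residual
     W X D^2 (L f) + beta D (L f) + gamma L f - W sum_j D^j (T f) A_j
   (A_j the cofactors, beta and gamma explicit in W) is a combination
   sum_(j<k) c_j D^j f whose coefficients are independent of f.  It vanishes
   at f = Y_i, so all c_j vanish wherever W is invertible.  Hence T f = lam f
   implies  W X D^2 (L f) + beta D (L f) + gamma L f = lam W L f.

   We apply this in S = R[x][t] with D = d/dx + t d/dt: multiplication by t
   plays the role of e^x and turns the rows L_f^(a+j)(-x), f in F2, into the
   iterated derivatives of t L_f^a(-x).  Then W = t^k2 Omega and
   L (L_m^a) = t^k2 L_n^(a;F); evaluating at t = 1 and at the point x and
   dividing by Omega(x) yields the eigenvalue equation D_F L_n^(a;F) = -n L_n^(a;F). *)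

Section Derivation.
Variable S : comNzRingType.
Variable D : S -> S.
Hypothesis DD : forall a b, D (a + b) = D a + D b.
Hypothesis DM : forall a b, D (a * b) = D a * b + a * D b.

Lemma D0 : D 0 = 0.
Proof. by apply: (addrI (D 0)); rewrite -DD !addr0. Qed.

Lemma DN a : D (- a) = - D a.
Proof. by apply: (addrI (D a)); rewrite -DD !subrr D0. Qed.

Lemma DB a b : D (a - b) = D a - D b.
Proof. by rewrite DD DN. Qed.

Lemma D1 : D 1 = 0.
Proof. by apply: (addrI (D 1)); have := DM 1 1; rewrite !mulr1 mul1r addr0 => <-. Qed.

Lemma Dnat n : D n%:R = 0.
Proof. by elim: n => [|n IH]; rewrite ?D0 // -addn1 natrD DD IH D1 addr0. Qed.

Lemma Dsign n : D ((-1) ^+ n) = 0.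
Proof.
by elim: n => [|n IH]; rewrite ?expr0 ?D1 // exprS DM IH DN D1 oppr0 mulr0 mul0r addr0.
Qed.

Lemma Dsum (I : Type) (r : seq I) (P : pred I) (F : I -> S) :
  D (\sum_(i <- r | P i) F i) = \sum_(i <- r | P i) D (F i).
Proof. exact: (big_morph D DD D0). Qed.

Lemma D_prod_seq (I : eqType) (r : seq I) (f : I -> S) : uniq r ->
  D (\prod_(i <- r) f i) = \sum_(i <- r) D (f i) * \prod_(j <- r | j != i) f j.
Proof.
elim: r => [|x r IH] /=; first by rewrite !big_nil D1.
case/andP => xr ur; rewrite big_cons DM IH // big_cons mulr_sumr.
congr (_ + _).
  congr (_ * _); rewrite big_cons eqxx /= [RHS]big_seq_cond [LHS]big_seq_cond.
  apply: eq_bigl => j.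
  by case: (boolP (j \in r)) => //= jr; apply/esym; apply: contraNneq xr => <-.
rewrite [LHS]big_seq [RHS]big_seq; apply: eq_bigr => i ir.
by rewrite big_cons (memPnC xr) // mulrCA.
Qed.

Lemma D_det n (A : 'M[S]_n) : D (\det A) =
  \sum_i \det (\matrix_(i', j) (if i' == i then D (A i' j) else A i' j)).
Proof.
rewrite /determinant Dsum.
under eq_bigr => s _ do
  rewrite DM Dsign mul0r add0r D_prod_seq ?index_enum_uniq // mulr_sumr.
rewrite exchange_big /=; apply: eq_bigr => i _; apply: eq_bigr => s _.
congr (_ * _); rewrite [RHS](bigD1 i) //= mxE eqxx; congr (_ * _).
by apply: eq_bigr => j /negbTE nji; rewrite mxE nji.
Qed.

Lemma D_det_col n (A : 'M[S]_n) : D (\det A) =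
  \sum_j \det (\matrix_(i, j') (if j' == j then D (A i j') else A i j')).
Proof.
rewrite -det_tr D_det; apply: eq_bigr => j _.
by rewrite -det_tr; congr (\det _); apply/matrixP => i j'; rewrite !mxE; case: ifP.
Qed.

End Derivation.

Section WronskianConjugation.
Variable S : comNzRingType.
Variable D : S -> S.
Hypothesis DD : forall a b, D (a + b) = D a + D b.
Hypothesis DM : forall a b, D (a * b) = D a * b + a * D b.
Variables (X b : S).
Hypothesis DX : D X = 1.
Hypothesis Db : D b = -1.

Definition Dn j (f : S) := iter j D f.
Definition opT (f : S) := X * D (D f) + b * D f.

Lemma DnS j f : Dn j.+1 f = D (Dn j f).
Proof. by []. Qed.

(* Commutation of D^j with T; this is where D X = 1 and D b = -1 enter. *)
Lemma Dn_opT j f :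
  Dn j (opT f) = X * Dn j.+2 f + (j%:R + b) * Dn j.+1 f - j%:R * Dn j f.
Proof.
elim: j => [|j IH]; first by rewrite /opT /= !mul0r subr0 add0r.
rewrite DnS IH !(DB DD, DD, DM) DX Db (Dnat DD DM) -!DnS -[j.+1]addn1 natrD.
ring.
Qed.

Lemma Dn_const j (l f : S) : D l = 0 -> Dn j (l * f) = l * Dn j f.
Proof. by move=> Dl; elim: j => [|j IH] //; rewrite DnS IH DM Dl mul0r add0r. Qed.

Variable k : nat.
Variable Y : 'I_k -> S.

Definition fY (f : S) (i : 'I_k.+1) :=
  if unlift ord0 i is Some i' then Y i' else f.
Definition wmx (f : S) : 'M[S]_k.+1 := \matrix_(i, j) Dn j (fY f i).
Definition cof (j : nat) :=
  if (j < k.+1)%N then cofactor (wmx 0) ord0 (inord j) else 0.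
Definition W := \det (\matrix_(i < k, j < k) Dn j (Y i)).

(* The cofactors do not depend on f: expansion along the first row. *)
Lemma det_wmx f : \det (wmx f) = \sum_(j < k.+1) Dn j f * cof j.
Proof.
rewrite (expand_det_row _ ord0); apply: eq_bigr => j _.
rewrite /cof ltn_ord inord_val mxE /fY unlift_none; congr (_ * _).
rewrite /cofactor; congr (_ * \det _).
by apply/matrixP => i j'; rewrite !mxE /fY liftK.
Qed.

Lemma det_wmx_Y i : \det (wmx (Y i)) = 0.
Proof.
apply: (@determinant_alternate _ _ _ ord0 (lift ord0 i)); first exact: neq_lift.
by move=> j; rewrite !mxE /fY unlift_none liftK.
Qed.

Lemma cof_last : cof k = (-1) ^+ k * W.
Proof.
rewrite /cof ltnSn /cofactor add0n.
have -> : inord k = ord_max :> 'I_k.+1 by apply: val_inj; rewrite /= inordK.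
congr (_ * \det _); apply/matrixP => i j.
by rewrite !mxE /fY liftK lift_max.
Qed.

(* D W differentiates the last column only: the other columns, once
   differentiated, coincide with their right neighbour. *)
Lemma D_W (jm : 'I_k) : jm.+1 = k ->
  D W = \det (\matrix_(i, j) (if j == jm then D (Dn j (Y i)) else Dn j (Y i))).
Proof.
move=> last_jm; rewrite /W (D_det_col DD DM) (bigD1 jm) //= big1 ?addr0.
  by congr (\det _); apply/matrixP => i j; rewrite !mxE; case: ifP.
move=> j ne_j; have lt_j : (j.+1 < k)%N.
  apply: leq_trans (eq_leq last_jm).
  by rewrite ltnS ltn_neqAle ne_j -ltnS last_jm ltn_ord.
rewrite -det_tr; apply: (@determinant_alternate _ _ _ j (Ordinal lt_j)).
  by rewrite -(inj_eq val_inj) /= neq_ltn ltnSn.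
by move=> i; rewrite !mxE eqxx -(inj_eq val_inj) /= gtn_eqF.
Qed.

Lemma cof_sublast : (0 < k)%N -> cof k.-1 = (-1) ^+ k.-1 * D W.
Proof.
move=> k_gt0; have lt_km : (k.-1 < k)%N by rewrite ltn_predL.
have inord_km : inord k.-1 = k.-1 :> nat := inordK (leq_pred k).
rewrite (@D_W (Ordinal lt_km)) /= ?prednK // /cof ltnS leq_pred /cofactor.
rewrite add0n inord_km; congr (_ * \det _); apply/matrixP => i j.
rewrite !mxE /fY liftK /= /bump inord_km.
case: (eqVneq j (Ordinal lt_km)) => [-> | ne_j] /=; first by rewrite leqnn.
have lt_j : (j < k.-1)%N by rewrite ltn_neqAle ne_j -ltnS prednK ?ltn_ord.
by rewrite leqNgt lt_j.
Qed.

Definition beta := W * (k%:R + b) - 2%:R * X * D W.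
Definition gamma := X * D (D W) - k%:R * W - (k%:R - 1 + b) * D W.
Definition conjop (L : S) := W * X * D (D L) + beta * D L + gamma * L.

Definition resid f :=
  conjop (\det (wmx f)) - W * \sum_(j < k.+1) Dn j (opT f) * cof j.

(* resid f is a combination of the D^j f with coefficients rcoef j. *)
Definition pcoef j :=
  W * X * D (D (cof j)) + beta * D (cof j) + gamma * cof j + j%:R * W * cof j.
Definition qcoef j := 2%:R * W * X * D (cof j) + (beta - W * (j%:R + b)) * cof j.
Definition rcoef j := pcoef j + (if j is j'.+1 then qcoef j' else 0).

Lemma D_det_wmx f :
  D (\det (wmx f)) = \sum_(j < k.+1) (Dn j.+1 f * cof j + Dn j f * D (cof j)).
Proof. by rewrite det_wmx (Dsum DD); apply: eq_bigr => j _; rewrite DM. Qed.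

Lemma D2_det_wmx f : D (D (\det (wmx f))) = \sum_(j < k.+1)
  (Dn j.+2 f * cof j + 2%:R * (Dn j.+1 f * D (cof j)) + Dn j f * D (D (cof j))).
Proof.
rewrite D_det_wmx (Dsum DD); apply: eq_bigr => j _; rewrite !(DD, DM) -!DnS.
by rewrite mulr2n mulrDl !mul1r; ring.
Qed.

Lemma resid_expand f :
  resid f = \sum_(j < k.+1) (Dn j f * pcoef j + Dn j.+1 f * qcoef j).
Proof.
rewrite /resid /conjop D2_det_wmx D_det_wmx det_wmx.
under [X in _ - W * X]eq_bigr => j _ do rewrite Dn_opT.
rewrite !mulr_sumr -!big_split -sumrB /=; apply: eq_bigr => j _.
by rewrite /pcoef /qcoef; ring.
Qed.

Lemma cof_out j : (k < j)%N -> cof j = 0.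
Proof. by move=> lt_kj; rewrite /cof ltnS leqNgt lt_kj. Qed.

Lemma pcoef_out : pcoef k.+1 = 0.
Proof. by rewrite /pcoef cof_out // !(D0 DD) !(mulr0, addr0). Qed.

Lemma resid_rcoef f : resid f = \sum_(j < k.+2) rcoef j * Dn j f.
Proof.
rewrite resid_expand big_split /=.
under [RHS]eq_bigr => j _ do rewrite /rcoef mulrDl.
rewrite big_split /= [X in _ = X + _]big_ord_recr /= pcoef_out mul0r addr0.
rewrite [X in _ = _ + X]big_ord_recl /= mul0r add0r.
by congr (_ + _); apply: eq_bigr => j _; rewrite mulrC.
Qed.

(* The two top coefficients vanish identically, by the formulas for the
   last two cofactors; this is what fixes beta and gamma. *)
Lemma D_signW j : D ((-1) ^+ j * W) = (-1) ^+ j * D W.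
Proof. by rewrite DM (Dsign DD DM) mul0r add0r. Qed.

Lemma rcoef_out : rcoef k.+1 = 0.
Proof. by rewrite /rcoef pcoef_out add0r /qcoef cof_last D_signW /beta; ring. Qed.

Lemma rcoef_last : rcoef k = 0.
Proof.
have [k0|k_gt0] := posnP k.
  have W1 : W = 1 by rewrite /W; move: (Y); rewrite k0 => ?; apply: det_mx00.
  rewrite /rcoef [in X in _ + X]k0 addr0 /pcoef cof_last /gamma W1 k0 expr0.
  by rewrite !mulr1 (D1 DM) (D0 DD); ring.
have -> : rcoef k = pcoef k + qcoef k.-1 by rewrite /rcoef; case: (k) k_gt0.
have sign_k : (-1) ^+ k = - (-1) ^+ k.-1 :> S.
  by rewrite -{1}(prednK k_gt0) exprS mulN1r.
have nat_k : k%:R = k.-1%:R + 1 :> S by rewrite -{1}(prednK k_gt0) -addn1 natrD.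
rewrite /pcoef /qcoef cof_last (cof_sublast k_gt0) !D_signW /beta /gamma.
by rewrite sign_k nat_k !DM !(DN DD) !(Dsign DD DM); ring.
Qed.

Lemma resid_low f : resid f = \sum_(j < k) rcoef j * Dn j f.
Proof.
by rewrite resid_rcoef !big_ord_recr /= rcoef_out rcoef_last !mul0r !addr0.
Qed.

Lemma resid_eigen f l : D l = 0 -> opT f = l * f ->
  resid f = conjop (\det (wmx f)) - W * (l * \det (wmx f)).
Proof.
move=> Dl Tf; rewrite /resid; congr (_ - _); rewrite det_wmx !mulr_sumr.
by apply: eq_bigr => j _; rewrite Tf Dn_const // !mulrA.
Qed.

Variable lam : 'I_k -> S.
Hypothesis Dlam : forall i, D (lam i) = 0.
Hypothesis opTY : forall i, opT (Y i) = lam i * Y i.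

Lemma resid_Y i : resid (Y i) = 0.
Proof.
by rewrite (resid_eigen (Dlam i) (opTY i)) det_wmx_Y /conjop !(D0 DD) !mulr0 !addr0 subr0.
Qed.

Variable F : fieldType.
Variable ev : {rmorphism S -> F}.

(* Where W is invertible, the system (resid Y_i = 0)_i forces rcoef j = 0. *)
Lemma rcoef_eq0 : ev W != 0 -> forall j : 'I_k, ev (rcoef j) = 0.
Proof.
move=> evW_neq0.
pose N := \matrix_(i < k, j < k) ev (Dn j (Y i)).
pose v := \col_(j < k) ev (rcoef j).
have N_unit : N \in unitmx.
  rewrite unitmxE unitfE -[X in X != 0](_ : ev W = _) // /W -det_map_mx.
  by congr (\det _); apply/matrixP => i j; rewrite !mxE.
have Nv0 : N *m v = 0.
  apply/matrixP => i j0; rewrite !mxE.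
  transitivity (ev (resid (Y i))); last by rewrite resid_Y rmorph0.
  by rewrite resid_low rmorph_sum; apply: eq_bigr => j _; rewrite !mxE rmorphM mulrC.
have v0 : v = 0 by rewrite -(mulKmx N_unit v) Nv0 mulmx0.
by move=> j; have := congr1 (fun M : 'cV_k => M j ord0) v0; rewrite !mxE.
Qed.

Theorem conjop_eigen f l : D l = 0 -> opT f = l * f -> ev W != 0 ->
  ev (conjop (\det (wmx f))) = ev l * ev W * ev (\det (wmx f)).
Proof.
move=> Dl Tf evW_neq0.
have := congr1 ev (resid_eigen Dl Tf); rewrite resid_low rmorph_sum big1.
  by move/esym/eqP; rewrite rmorphB subr_eq0 => /eqP ->; rewrite !rmorphM mulrCA mulrA.
by move=> j _; rewrite rmorphM rcoef_eq0 // mul0r.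
Qed.

End WronskianConjugation.

Section LaguerreIdentities.
Variable R : numFieldType.

Lemma natr_fact_neq0 i : (i`!)%:R != 0 :> R.
Proof. by rewrite pnatr_eq0 -lt0n fact_gt0. Qed.

Lemma natrS_neq0 i : (i.+1)%:R != 0 :> R.
Proof. by rewrite pnatr_eq0. Qed.

Lemma gbinom0 (A : R) : gbinom A 0 = 1.
Proof. by rewrite /gbinom big_ord0 fact0 divr1. Qed.

Lemma gbinomS (A : R) r : r.+1%:R * gbinom A r.+1 = (A - r%:R) * gbinom A r.
Proof.
rewrite /gbinom big_ord_recr /= factS natrM.
have := natr_fact_neq0 r; have := natrS_neq0 r => nzS nzf.
by field; rewrite nzf addrC natr1 nzS.
Qed.

Lemma gbinom_pascal (A : R) r : gbinom (A + 1) r.+1 = gbinom A r.+1 + gbinom A r.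
Proof.
rewrite /gbinom big_ord_recl big_ord_recr /= factS natrM subr0.
have -> : \prod_(i < r) (A + 1 - (lift ord0 i)%:R) = \prod_(i < r) (A - i%:R).
  by apply: eq_bigr => i _; rewrite lift0 -addn1 natrD; ring.
have := natr_fact_neq0 r; have := natrS_neq0 r => nzS nzf.
by field; rewrite nzf addrC natr1 nzS.
Qed.

Definition lagcoef (c : R) m i := ((-1) ^+ i / (i`!)%:R) * gbinom (m%:R + c) (m - i).

Lemma coef_laguerre c m i :
  (laguerre c m)`_i = if (i <= m)%N then lagcoef c m i else 0.
Proof.
rewrite /laguerre coef_sum.
under eq_bigr do rewrite coefZ coefXn.
case: ifP => le_im.
  rewrite (bigD1 (Ordinal (le_im : (i < m.+1)%N))) //= eqxx mulr1 big1 ?addr0 //.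
  by move=> j ne_j; rewrite eq_sym (negbTE (ne_j : (j : nat) != i)) mulr0.
rewrite big1 // => j _; have : (j <= m)%N := ltn_ord j.
by case: eqP => [<-|_]; rewrite ?le_im ?mulr0.
Qed.

Lemma laguerre_coef_rec (c : R) m i :
  (i.+1%:R * (i%:R + c + 1)) * (laguerre c m)`_i.+1
  + (m%:R - i%:R) * (laguerre c m)`_i = 0.
Proof.
rewrite !coef_laguerre; case: (ltngtP i m) => [lt_im|_|->];
  [rewrite /lagcoef | by rewrite !mulr0 addr0 | by rewrite subrr mul0r mulr0 addr0].
rewrite -(subnSK lt_im); set r := (m - i.+1)%N.
have subR : (m%:R - i%:R : R) = r.+1%:R by rewrite -natrB ?subnSK // ltnW.
have sum_r : (m%:R + c - r%:R : R) = i%:R + c + 1 by rewrite /r natrB // -natr1; ring.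
have binom_r : gbinom (m%:R + c) r.+1 = (i%:R + c + 1) * gbinom (m%:R + c) r / r.+1%:R.
  by rewrite -sum_r -gbinomS; field; rewrite addrC natr1 natrS_neq0.
rewrite subR binom_r factS natrM exprS.
have := natr_fact_neq0 i; have := natrS_neq0 i; have := natrS_neq0 r => nz_r nz_i nzf.
by field; rewrite !(addrC 1) !natr1 nzf nz_i nz_r.
Qed.

Lemma laguerre_ode (c : R) m : 'X * (laguerre c m)^`()^`()
  + ((c + 1)%:P - 'X) * (laguerre c m)^`() + m%:R *: laguerre c m = 0.
Proof.
apply/polyP => i; rewrite coef0 mulrBl.
rewrite !(coefD, coefN, coefCM, coefXM, coefZ, coef_deriv).
case: i => [|j] /=; last by rewrite -[RHS](laguerre_coef_rec c m j.+1); ring.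
by rewrite mulr1n -[RHS](laguerre_coef_rec c m 0); ring.
Qed.

Lemma laguerre_shift (c : R) m :
  laguerre (c + 1) m = laguerre c m - (laguerre c m)^`().
Proof.
apply/polyP => i; rewrite coefB coef_deriv !coef_laguerre.
case: (ltngtP i m) => [lt_im|_|->]; [rewrite /lagcoef | by rewrite mul0rn subr0 |
  by rewrite /lagcoef subnn !gbinom0 mul0rn subr0].
rewrite -(subnSK lt_im) addrA gbinom_pascal factS natrM exprS -mulr_natr.
have := natr_fact_neq0 i; have := natrS_neq0 i => nz_i nzf.
by field; rewrite !(addrC 1) !natr1 nzf nz_i.
Qed.

End LaguerreIdentities.

(* The concrete setting: S = R[x][t] with the derivation d/dx + t d/dt.
   A factor t^g plays the role of e^(g x). *)
Section LaguerreRealisation.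
Variable R : numFieldType.
Local Notation S := {poly {poly R}}.

Definition Dt (P : S) : S := map_poly (@deriv R) P + 'X * P^`().

Lemma map_deriv_mul (P Q : S) : map_poly (@deriv R) (P * Q) =
  map_poly (@deriv R) P * Q + P * map_poly (@deriv R) Q.
Proof.
apply/polyP => i; rewrite coefD coef_map !coefM raddf_sum -big_split.
by apply: eq_bigr => j _; rewrite /= !coef_map /= derivM.
Qed.

Lemma DtD P Q : Dt (P + Q) = Dt P + Dt Q.
Proof. by rewrite /Dt raddfD derivD; ring. Qed.

Lemma DtM P Q : Dt (P * Q) = Dt P * Q + P * Dt Q.
Proof. by rewrite /Dt map_deriv_mul derivM; ring. Qed.

Lemma Dt_C q : Dt q%:P = (q^`())%:P.
Proof. by rewrite /Dt map_polyC derivC mulr0 addr0. Qed.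

Lemma Dtn_C q j : Dn Dt j q%:P = (q^`(j))%:P.
Proof. by elim: j => [|j IH] //; rewrite DnS IH Dt_C derivnS. Qed.

Lemma Dt_XnC m q : Dt ('X^m * q%:P) = 'X^m * (q *+ m + q^`())%:P.
Proof.
have map_Xn : map_poly (@deriv R) 'X^m = 0.
  by apply/polyP => i; rewrite coef_map coefXn coef0; case: (i == m); rewrite /= ?derivC.
rewrite DtM Dt_C /Dt map_Xn add0r derivXn polyCD polyCMn.
by case: m {map_Xn} => [|m] /=; rewrite ?mulr0n ?mulr0 ?mul0r ?add0r // !exprS; ring.
Qed.

Lemma det_gauge n (g : 'I_n -> nat) (B : 'M[{poly R}]_n) :
  \det (\matrix_(i, j) ('X^(g i) * (B i j)%:P) : 'M[S]_n) = 'X^(\sum_i g i) * (\det B)%:P.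
Proof.
have -> : (\matrix_(i, j) ('X^(g i) * (B i j)%:P) : 'M[S]_n) =
    diag_mx (\row_i 'X^(g i)) *m map_mx polyC B.
  by apply/matrixP => i j; rewrite mul_diag_mx !mxE.
rewrite det_mulmx det_diag det_map_mx -prodrXr; congr (_ * _).
by apply: eq_bigr => i _; rewrite mxE.
Qed.

Lemma laguerre_reflect_shift (c : R) f : laguerre (c + 1) f \Po (-'X) =
  (laguerre c f \Po (-'X)) + (laguerre c f \Po (-'X))^`().
Proof. by rewrite laguerre_shift comp_polyB deriv_comp derivN derivX mulrN1; ring. Qed.

Lemma laguerre_reflect_ode (c : R) f : let psi := laguerre c f \Po (-'X) in
  'X * psi^`()^`() + ((c + 1)%:P + 'X) * psi^`() = f%:R * psi.
Proof.
move=> psi; have := congr1 (fun p => p \Po (-'X)) (laguerre_ode c f).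
rewrite /= comp_poly0 !comp_polyD !comp_polyM comp_polyX comp_polyB comp_polyC.
rewrite comp_polyZ comp_polyX scaler_nat => ode.
rewrite /psi !deriv_comp derivN derivX mulrN1 derivN deriv_comp derivN derivX mulrN1.
by apply/eqP; rewrite -subr_eq0 -oppr0 -ode -mulr_natl; apply/eqP; ring.
Qed.

Variable a : int.
Variables F1 F2 : seq nat.
Local Notation k1 := (size F1).
Local Notation k2 := (size F2).
Local Notation k := (size F1 + size F2)%N.

(* The gauge exponent is 0 on the F1 rows and 1 on the F2 rows, so that
   the row functions Y_i are L_f^a and t L_f^a(-x) respectively. *)
Definition gauge (i : nat) : nat := if (i < k1)%N then 0 else 1.
Definition Yrow (i : 'I_k) : S := 'X^(gauge i) * (rowF R a F1 F2 i 0)%:P.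

Lemma sum_gauge : (\sum_(i < k) gauge i = k2)%N.
Proof.
rewrite big_split_ord /= big1 ?add0n => [|i _]; last by rewrite /gauge /= ltn_ord.
rewrite (eq_bigr (fun _ => 1%N)) => [|i _]; last by rewrite /gauge /= ltnNge leq_addr.
by rewrite sum1_card card_ord.
Qed.

Lemma rowF_succ i j :
  rowF R a F1 F2 i j.+1 = rowF R a F1 F2 i j *+ gauge i + (rowF R a F1 F2 i j)^`().
Proof.
rewrite /rowF /gauge; case: ifP => _; first by rewrite mulr0n add0r derivnS.
rewrite mulr1n -laguerre_reflect_shift -[j.+1]addn1 PoszD addrA.
by rewrite [in LHS]rmorphD.
Qed.

Lemma Dtn_Yrow i j : Dn Dt j (Yrow i) = 'X^(gauge i) * (rowF R a F1 F2 i j)%:P.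
Proof. by elim: j => [|j IH] //; rewrite DnS IH Dt_XnC rowF_succ. Qed.

(* X = x and b = a + 1 - x, so that T is the Laguerre operator of L_m^a. *)
Definition Xc : S := ('X : {poly R})%:P.
Definition bc : S := ((a%:~R + 1 : R)%:P)%:P - Xc.

Lemma polyC_opT (A B : {poly R}) (c : R) :
  Xc * A%:P + (c%:P%:P - Xc) * B%:P = ('X * A + (c%:P - 'X) * B)%:P.
Proof. by rewrite /Xc polyCD !polyCM polyCB. Qed.

Lemma opT_laguerre m : opT Dt Xc bc (laguerre a%:~R m)%:P =
  (- (m%:R : R))%:P%:P * (laguerre a%:~R m)%:P.
Proof.
rewrite /opT !Dt_C /bc polyC_opT -polyCM mul_polyC scaleNr; congr (_%:P).
by apply/eqP; rewrite -subr_eq0 opprK; apply/eqP; apply: laguerre_ode.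
Qed.

Definition lamY (i : nat) : R :=
  if (i < k1)%N then - (nth 0%N F1 i)%:R
  else a%:~R + 1 + (nth 0%N F2 (i - k1))%:R.

Lemma opT_Yrow (i : 'I_k) : opT Dt Xc bc (Yrow i) = (lamY i)%:P%:P * Yrow i.
Proof.
rewrite /Yrow /gauge /lamY /rowF; case: ifP => _; first by rewrite !mul1r opT_laguerre.
rewrite addr0 /opT !Dt_XnC !mulr1n.
set psi := laguerre _ _ \Po _.
transitivity ('X^1 * (Xc * (psi + psi^`() + (psi + psi^`())^`())%:P
                     + bc * (psi + psi^`())%:P)); first by ring.
rewrite /bc polyC_opT mulrCA -polyCM; congr (_ * _%:P).
have := laguerre_reflect_ode (a%:~R : R) (nth 0%N F2 (i - k1)).
rewrite /= -/psi !polyCD polyC_natr => ode.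
by rewrite [RHS]mulrDl -ode derivD; ring.
Qed.

Lemma wronskian_Yrow : W Dt Yrow = 'X^k2 * (OmegaF R a F1 F2)%:P.
Proof.
rewrite /W -[X in 'X^X]sum_gauge -det_gauge; congr (\det _).
by apply/matrixP => i j; rewrite !mxE Dtn_Yrow.
Qed.

Lemma wmx_laguerre n : \det (wmx Dt Yrow (laguerre a%:~R (n - uF F1 F2))%:P)
  = 'X^k2 * (LaguerreF R a F1 F2 n)%:P.
Proof.
pose g (i : 'I_k.+1) := if i == 0 :> nat then 0%N else gauge i.-1.
have sum_g : (\sum_i g i = k2)%N.
  by rewrite big_ord_recl add0n -[RHS]sum_gauge; apply: eq_bigr => i _; rewrite /g lift0.
rewrite -[X in 'X^X]sum_g -det_gauge; congr (\det _); apply/matrixP => i j.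
rewrite !mxE /fY /g; case: (unliftP ord0 i) => [i' ->|->] /=.
  by rewrite Dtn_Yrow add0n.
by rewrite Dtn_C expr0 mul1r.
Qed.

Definition evx (x : R) : {rmorphism S -> R} := horner_eval x \o horner_eval 1.

Lemma evx_C x q : evx x q%:P = q.[x].
Proof. by rewrite /evx /= !horner_evalE hornerC. Qed.

Lemma evx_X x : evx x 'X = 1.
Proof. by rewrite /evx /= !horner_evalE hornerX hornerC. Qed.

Lemma evx_gauge x m q : evx x ('X^m * q%:P) = q.[x].
Proof. by rewrite rmorphM rmorphXn evx_X expr1n mul1r evx_C. Qed.

Lemma laguerreF_conjugated n x : (OmegaF R a F1 F2).[x] != 0 ->
  evx x (conjop Dt Xc bc Yrow ('X^k2 * (LaguerreF R a F1 F2 n)%:P)) =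
  - (n - uF F1 F2)%:R * (OmegaF R a F1 F2).[x] * (LaguerreF R a F1 F2 n).[x].
Proof.
move=> Om_x; rewrite -wmx_laguerre.
have DX : Dt Xc = 1 by rewrite Dt_C derivX.
have Db : Dt bc = -1 by rewrite (DB DtD) Dt_C derivC DX sub0r.
have Dlam i : Dt (lamY i)%:P%:P = 0 by rewrite Dt_C derivC.
have Dl : Dt (- (n - uF F1 F2)%:R)%:P%:P = 0 by rewrite Dt_C derivC.
have evW : evx x (W Dt Yrow) != 0 by rewrite wronskian_Yrow evx_gauge.
rewrite (conjop_eigen DtD DtM DX Db Dlam opT_Yrow Dl (opT_laguerre _) evW).
by rewrite wmx_laguerre wronskian_Yrow !evx_gauge !evx_C !hornerC.
Qed.

End LaguerreRealisation.

Theorem mainTheorem12 (R : numFieldType) (a : int) (F1 F2 : seq nat) :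
  a < 0 ->
  sorted ltn F1 -> sorted ltn F2 ->
  all (fun f => 0 < f)%N F1 -> all (fun f => 0 < f)%N F2 ->
  forall n : nat, in_sigmaF F1 F2 n ->
  forall x : R, (OmegaF R a F1 F2).[x] != 0 ->
    DF a F1 F2 (LaguerreF R a F1 F2 n) x = - n%:R * (LaguerreF R a F1 F2 n).[x].
Proof.
move=> _ _ _ _ _ n /andP[le_un _] x Om_x.
have := laguerreF_conjugated n Om_x.
rewrite /conjop /beta /gamma wronskian_Yrow !Dt_XnC /Xc /bc.
rewrite !(rmorphD, rmorphB, rmorphM, rmorphN, rmorphXn, rmorph_nat, evx_X, evx_C).
rewrite !(expr1n, hornerD, hornerMn, derivD, derivMn, hornerC, hornerX) natrB //.
rewrite /DF /h1F /h0F !derivnS derivn0 natrD.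
set o0 := (OmegaF R a F1 F2).[x] in Om_x *.
set o1 := ((OmegaF R a F1 F2)^`()).[x]; set o2 := ((OmegaF R a F1 F2)^`()^`()).[x].
set l0 := (LaguerreF R a F1 F2 n).[x]; set l1 := ((LaguerreF R a F1 F2 n)^`()).[x].
set l2 := ((LaguerreF R a F1 F2 n)^`()^`()).[x].
move/eqP; rewrite -subr_eq0 => /eqP conj_eq.
apply/eqP; rewrite -subr_eq0; apply/eqP; apply: (mulfI Om_x).
by rewrite mulr0 -[RHS]conj_eq; field.
Qed.
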